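(* Fix an integer base $b \ge 2$ and a function $f_*:\{0,1,\dots,b-1\}\to\mathbb{Z}^{\ge 0}$ with $f_*(0)=0$, $f_*(1)=1$ and $\gcd(b,f_*(b-1))=1$. Let $f:\mathbb{Z}^{\ge 0}\to\mathbb{Z}^{\ge 0}$ be the associated digit map, $f\left(\sum_{i=0}^n a_i b^i\right)=\sum_{i=0}^n f_*(a_i)$, where $\sum_{i=0}^n a_ib^i$ is the base-$b$ representation ($0\le a_i\le b-1$). Suppose there is a digit $0\le m_*\le b-1$ such that $f(m_* )-m_*$ is relatively prime to $f(b-1)$. Then for any cycle number $u$ and any positive integer $n$, there exist $n$ consecutive positive integers that are all $u$-integers.
   Context: $f^r$ denotes the $r$-fold iterate of $f$. A cycle number is a positive integer $u$ with $f^r(u)=u$ for some $r\ge 1$. For a cycle number $u$, a positive integer $n$ is a $u$-integer if $f^r(n)=u$ for some $r\ge 1$. *)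

From mathcomp Require Import all_boot all_order all_algebra.
Set Implicit Arguments. Unset Strict Implicit. Unset Printing Implicit Defensive.

Definition digit (b n i : nat) : nat := (n %/ b ^ i) %% b.

(* Digit map: sum of fstar over the base-b representation of n, which has
   digits a_0, ..., a_k with k = trunc_log b n (for n = 0 the representation
   is the single digit 0). *)
Definition digit_map (b : nat) (fstar : nat -> nat) (n : nat) : nat :=
  \sum_(i < (trunc_log b n).+1) fstar (digit b n i).

Definition cycle_number (f : nat -> nat) (u : nat) : Prop :=
  0 < u /\ exists r, 0 < r /\ iter r f u = u.

Definition u_integer (f : nat -> nat) (u n : nat) : Prop :=
  0 < n /\ exists r, 0 < r /\ iter r f n = u.

(* Call S translatable when some translate c + S consists of u-integers, and
   let phi merge p and q when phi p = phi q and phi reflects translatability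
   (phi @ S translatable implies S translatable).  Every shift
   s |-> f (z + s) reflects translatability, since prepending digits with
   digit sum c adds c to f.  Prepending the digits of p + 1 to z shows that
   the gap d between p and p + d can be merged as soon as the gap between
   f z and f (z + d) can.  With z = b^L - 1 these values are L f(b-1) and
   1 + f(d-1), so d reduces to a gap N with N + 1 + f(d-1) = L f(b-1); we take
   N with digit sum b^k - 1, which reduces to the gap 0 because
   f (1 + (b^k - 1)) = f 1.  Such an N is built from the digits ms and 1
   placed at positions K with b^K = 1 mod f(b-1), where the number behaves
   additively modulo f(b-1); coprimality of f(ms) - ms and f(b-1) yields the
   required residue.  Once every gap can be merged, the elements of
   {0, ..., n-1} are merged one at a time into a translatable singleton. *)

From mathcomp Require Import all_boot all_order all_algebra.
From mathcomp Require Import cyclic zify ring.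
Set Implicit Arguments. Unset Strict Implicit. Unset Printing Implicit Defensive.
Import GRing.Theory Num.Theory.

Lemma coprimez_solve_mod (x y : int) (m : nat) : 0 < m -> coprimez x m ->
  exists2 a : nat, a < m & ((a%:Z * x)%R = y %[mod m])%Z.
Proof.
move=> m_gt0 /eqP cop_xm; have [u [v uv1]] := Bezoutz x m; rewrite cop_xm in uv1.
have a_ge0 : (0 <= ((y * u) %% m)%Z)%R by rewrite modz_ge0 // eqz_nat -lt0n.
exists `|((y * u) %% m)%Z|%N; first by rewrite -ltz_nat abszE ger0_norm // ltz_pmod.
rewrite abszE ger0_norm // modzMml.
have -> : (y * u * x = - (y * v) * m + y)%R by rewrite -[X in (_ = _ + X)%R]mulr1 -uv1; ring.
exact: modzMDl.
Qed.

Section DigitMap.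
Variables (b : nat) (fstar : nat -> nat).
Hypotheses (hb : 1 < b) (fstar0 : fstar 0 = 0).
Local Notation f := (digit_map b fstar).

Lemma sum_digits_widen n N M : n < b ^ N -> N <= M ->
  \sum_(i < M) fstar (digit b n i) = \sum_(i < N) fstar (digit b n i).
Proof.
move=> ltn_bN leNM; rewrite -!(big_mkord xpredT (fun i => fstar (digit b n i))).
rewrite (big_cat_nat (leq0n N) leNM) /=.
rewrite [X in _ + X]big1_seq ?addn0 // => i /andP[_]; rewrite mem_index_iota => /andP[leNi _].
by rewrite /digit divn_small ?mod0n // (leq_trans ltn_bN) // leq_pexp2l // ltnW.
Qed.

Lemma digit_map_sum n N : n < b ^ N -> f n = \sum_(i < N) fstar (digit b n i).
Proof.
move=> ltn_bN; rewrite /digit_map -(sum_digits_widen (trunc_log_ltn n hb) (leq_maxl _ N)).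
exact: sum_digits_widen ltn_bN (leq_maxr _ N).
Qed.

Lemma digit_map0 : f 0 = 0.
Proof. by rewrite (@digit_map_sum 0 0) ?big_ord0. Qed.

Lemma digit_map_divn n : f n = fstar (n %% b) + f (n %/ b).
Proof.
have ltn_b : n < b ^ n.+1 := ltnW (ltn_expl _ hb).
have ltdivn_b : n %/ b < b ^ n by rewrite ltn_divLR ?(ltnW hb) // -expnSr.
rewrite (digit_map_sum ltn_b) (digit_map_sum ltdivn_b) big_ord_recl /digit expn0 divn1.
by congr (_ + _); apply: eq_bigr => i _; rewrite /bump /= expnS divnMA.
Qed.

Lemma digit_map_digit d : d < b -> f d = fstar d.
Proof. by move=> ltdb; rewrite digit_map_divn modn_small // divn_small // digit_map0 addn0. Qed.

Lemma digit_map_concat A K r : r < b ^ K -> f (A * b ^ K + r) = f A + f r.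
Proof.
have b_gt0 : 0 < b := ltnW hb.
elim: K A r => [|K IH] A r.
  by rewrite expn0 ltnS leqn0 => /eqP->; rewrite muln1 addn0 digit_map0 addn0.
move=> ltrb; rewrite digit_map_divn (digit_map_divn r) expnSr mulnA.
rewrite -modnDml modnMl add0n divnMDl // IH ?ltn_divLR -?expnSr //; lia.
Qed.

Lemma digit_map_shift N K : f (N * b ^ K) = f N.
Proof. by rewrite -[N * b ^ K]addn0 digit_map_concat ?expn_gt0 ?(ltnW hb) // digit_map0 addn0. Qed.

Hypothesis fstar1 : fstar 1 = 1.
Local Notation g := (f b.-1).

Lemma digit_map_expn k : f (b ^ k) = 1.
Proof. by rewrite -[b ^ k]mul1n digit_map_shift digit_map_digit. Qed.

Lemma digit_map_predn_expn L : f (b ^ L - 1) = L * g.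
Proof.
have b_gt0 : 0 < b := ltnW hb.
elim: L => [|L IH]; first by rewrite expn0 subnn digit_map0.
have -> : b ^ L.+1 - 1 = (b ^ L - 1) * b ^ 1 + b.-1.
  by have := expn_gt0 b L; rewrite expnSr expn1 b_gt0; move: (b ^ L) => B; nia.
by rewrite digit_map_concat ?IH ?expn1 ?ltn_predL //; lia.
Qed.

Lemma digit_map_onto c : exists x, f x = c.
Proof.
elim: c => [|c [x fx]]; first by exists 0; rewrite digit_map0.
by exists (x * b ^ 1 + 1); rewrite digit_map_concat ?expn1 // (digit_map_digit hb) fstar1 fx addn1.
Qed.

Section Residues.
Hypothesis coprime_bg : coprime b g.

Lemma digit_map_predn_gt0 : 0 < g.
Proof.
by move: coprime_bg; rewrite lt0n; apply: contraTneq => ->; rewrite /coprime gcdn0; lia.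
Qed.

Lemma exists_expn_eq1_mod B : exists2 K, B < b ^ K & b ^ K = 1 %[mod g].
Proof.
exists (totient g * B).
  apply: leq_trans (ltn_expl B hb) _; rewrite leq_pexp2l ?(ltnW hb) // leq_pmull //.
  by rewrite totient_gt0 digit_map_predn_gt0.
by rewrite expnM -modnXm Euler_exp_totient // modnXm exp1n.
Qed.

Lemma digit_map_add_mod x y : exists z, f z = f x + f y /\ z = x + y %[mod g].
Proof.
have [K ltyb bK1] := exists_expn_eq1_mod y.
exists (x * b ^ K + y); rewrite digit_map_concat //; split => //.
by rewrite -modnDml -modnMmr bK1 modnMmr muln1 modnDml.
Qed.

Lemma digit_map_muln_mod a x : exists z, f z = a * f x /\ z = a * x %[mod g].
Proof.
elim: a => [|a [z [fz zE]]]; first by exists 0; rewrite digit_map0.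
have [z' [fz' z'E]] := digit_map_add_mod x z.
by exists z'; rewrite fz' fz mulSn z'E -modnDmr zE modnDmr mulSn.
Qed.

Variable ms : nat.
Hypothesis coprime_ms : coprimez ((f ms)%:Z - ms%:Z)%R g.

Lemma exists_digit_map_dvd v c B : g * f ms < v ->
  exists N, [/\ f N = v, B <= N & g %| N + c].
Proof.
move=> ltv.
have [a lt_ag aE] := coprimez_solve_mod (v + c)%:Z digit_map_predn_gt0 coprime_ms.
have le_av : a * f ms <= v by apply: leq_trans (ltnW ltv); rewrite leq_mul2r (ltnW lt_ag) orbT.
have [x [fx xE]] := digit_map_muln_mod a ms.
have [y [fy yE]] := digit_map_muln_mod (v - a * f ms) 1.
have [z [fz zE]] := digit_map_add_mod x y.
have [K ltBb bK1] := exists_expn_eq1_mod B.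
have fzv : f z = v by rewrite fz fx fy (digit_map_digit hb) fstar1 muln1 subnKC.
have z_gt0 : 0 < z.
  by case: z fzv {fz zE} => // /esym; rewrite digit_map0 => v0; rewrite v0 ltn0 in ltv.
exists (z * b ^ K); split; first by rewrite digit_map_shift.
  exact: leq_trans (ltnW ltBb) (leq_pmull _ z_gt0).
have zbK : z * b ^ K = z %[mod g] by rewrite -modnMmr bK1 modnMmr muln1.
rewrite /dvdn -modnDml zbK zE modnDml -modnDml -(modnDm x) xE yE modnDm modnDml muln1.
suff : (g%:Z %| (a * ms + (v - a * f ms) + c)%N%:Z)%Z by [].
have -> : ((a * ms + (v - a * f ms) + c)%N%:Z = (v + c)%:Z - a%:Z * ((f ms)%:Z - ms%:Z))%R.
  by rewrite !PoszD -subzn // !PoszM; ring.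
by rewrite -eqz_mod_dvd aE.
Qed.

End Residues.

Section Merging.
Variable u : nat.
Hypothesis cycle_u : cycle_number f u.
Local Notation u_int := (u_integer f u).

Definition translatable (S : seq nat) := exists c, forall s, s \in S -> u_int (c + s).

Definition reflects_translatable (phi : nat -> nat) :=
  forall S, translatable (map phi S) -> translatable S.

Definition mergeable p q := exists2 phi, reflects_translatable phi & phi p = phi q.

Definition gap_mergeable d := forall p, mergeable p (p + d).

Lemma u_integer_digit_map x : u_int (f x) -> u_int x.
Proof.
case=> fx_gt0 [r [r_gt0 fr]]; split; last by exists r.+1; rewrite iterSr.
by case: x fx_gt0 {fr} => //; rewrite digit_map0.
Qed.

Lemma translatable_sub S T : {subset S <= T} -> translatable T -> translatable S.
Proof. by move=> sub_ST [c uT]; exists c => s /sub_ST /uT. Qed.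

Lemma reflects_translatable_comp phi psi :
  reflects_translatable phi -> reflects_translatable psi -> reflects_translatable (psi \o phi).
Proof. by move=> phiR psiR S; rewrite map_comp => /psiR /phiR. Qed.

Lemma reflects_translatable_shift z : reflects_translatable (fun s => f (z + s)).
Proof.
move=> S [c uS]; have [y fy] := digit_map_onto c.
set K := z + \max_(s <- S) s.
exists (y * b ^ K + z) => s Ss; apply: u_integer_digit_map.
rewrite -addnA digit_map_concat ?fy; first exact/uS/map_f.
apply: leq_ltn_trans (ltn_expl K hb); rewrite leq_add2l; exact: leq_bigmax_seq.
Qed.

Lemma mergeable_sym p q : mergeable p q -> mergeable q p.
Proof. by case=> phi phiR e; exists phi. Qed.

Lemma gap_mergeable0 : gap_mergeable 0.
Proof. by move=> p; exists id; rewrite ?addn0 // => S; rewrite map_id. Qed.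

Lemma gap_mergeable_transfer z d :
  (forall p, mergeable (p + f z) (p + f (z + d))) -> gap_mergeable d.
Proof.
move=> merge_fz p; set K := z + d.
have ltzd_bK : z + d < b ^ K := ltn_expl _ hb.
set t := p.+1 * b ^ K + z - p.
have tpE : t + p = p.+1 * b ^ K + z.
  by rewrite subnK //; have := expn_gt0 b K; rewrite (ltnW hb); move: (b ^ K) => B; nia.
have [psi psiR e] := merge_fz (f p.+1).
exists (psi \o fun s => f (t + s)).
  exact: reflects_translatable_comp (@reflects_translatable_shift t) psiR.
by rewrite /= addnA tpE -addnA !digit_map_concat // (leq_ltn_trans (leq_addr d z)).
Qed.

Lemma gap_mergeable_up z d e :
  f (z + d) = f z + e -> gap_mergeable e -> gap_mergeable d.
Proof. by move=> fzd merge_e; apply: (@gap_mergeable_transfer z) => p; rewrite fzd addnA. Qed.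

Lemma gap_mergeable_down z d e :
  f z = f (z + d) + e -> gap_mergeable e -> gap_mergeable d.
Proof.
move=> fz merge_e; apply: (@gap_mergeable_transfer z) => p.
by rewrite fz addnA; apply: mergeable_sym.
Qed.

Lemma translatable1 p : translatable [:: p].
Proof.
apply: (@reflects_translatable_shift (b ^ p - p)) => /=.
rewrite subnK ?digit_map_expn; last exact: ltnW (ltn_expl p hb).
have [u_gt0 _] := cycle_u; exists u.-1 => s; rewrite inE => /eqP->.
by rewrite addn1 prednK.
Qed.

Lemma translatable_all : (forall d, gap_mergeable d) -> forall S, translatable S.
Proof.
move=> merge_all S; have [n] := ubnP (size S).
elim: n S => // n IH [|p [|q S]] /= ltSn; first by exists 0.
  exact: translatable1.
have [phi phiR e] : mergeable p q.
  by case: (leqP p q) => [/subnKC <-|/ltnW/subnKC <-]; [|apply: mergeable_sym]; apply: merge_all.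
apply: phiR => /=; rewrite e; apply: (@translatable_sub _ (phi q :: map phi S)).
  by move=> x; rewrite !inE orbA orbb.
by apply: IH; rewrite /= size_map.
Qed.

Lemma gap_mergeable_predn_expn k : gap_mergeable (b ^ k - 1).
Proof.
apply: (@gap_mergeable_up 1 _ 0) gap_mergeable0.
by rewrite addn0 addnC subnK ?expn_gt0 ?(ltnW hb) // digit_map_expn (digit_map_digit hb).
Qed.

Hypothesis coprime_bg : coprime b g.
Variable ms : nat.
Hypothesis coprime_ms : coprimez ((f ms)%:Z - ms%:Z)%R g.

Lemma gap_mergeable_all d : gap_mergeable d.
Proof.
case: d => [|d]; first exact: gap_mergeable0.
set c := 1 + f d; set k := g * f ms + 1.
have g_gt0 : 0 < g := digit_map_predn_gt0 coprime_bg.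
have lt_gfms_bk : g * f ms < b ^ k - 1 by have := ltn_expl k hb; rewrite /k; lia.
have [N [fN leN dvd_gN]] := exists_digit_map_dvd coprime_bg coprime_ms c (d.+1 * g) lt_gfms_bk.
have merge_N : gap_mergeable N.
  by apply: (@gap_mergeable_up 0 _ _ _ (gap_mergeable_predn_expn k)); rewrite digit_map0.
set L := (N + c) %/ g; have LgE : L * g = N + c := divnK dvd_gN.
have le_dL : d.+1 <= L by rewrite -(leq_pmul2r g_gt0) LgE; lia.
apply: (@gap_mergeable_down (b ^ L - 1) _ N _ merge_N).
have -> : b ^ L - 1 + d.+1 = 1 * b ^ L + d by have := ltn_expl L hb; lia.
rewrite digit_map_predn_expn LgE digit_map_concat ?(digit_map_digit hb) ?fstar1 -/c 1?addnC //.
by have := ltn_expl L hb; lia.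
Qed.

End Merging.

End DigitMap.

Theorem theorem1p1 (b : nat) (fstar : nat -> nat)
  (hb : 2 <= b)
  (h0 : fstar 0 = 0) (h1 : fstar 1 = 1)
  (hcop : coprime b (fstar b.-1))
  (hm : exists2 ms : nat, ms < b &
     coprimez ((digit_map b fstar ms)%:Z - ms%:Z)%R
              (digit_map b fstar b.-1)%:Z) :
  forall u : nat, cycle_number (digit_map b fstar) u ->
  forall n : nat, 0 < n ->
  exists k : nat, 0 < k /\
    forall j : nat, j < n -> u_integer (digit_map b fstar) u (k + j).
Proof.
move=> u cycle_u n n_gt0; case: hm => ms _ coprime_ms.
have lt_predb_b : b.-1 < b by rewrite ltn_predL ltnW.
rewrite -(digit_map_digit hb h0 lt_predb_b) in hcop.
have merge_all := gap_mergeable_all hb h0 h1 u hcop coprime_ms.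
have [k u_int_k] := translatable_all hb h0 h1 cycle_u merge_all (iota 0 n).
have u_int_kj j : j < n -> u_integer (digit_map b fstar) u (k + j).
  by move=> lt_jn; apply: u_int_k; rewrite mem_iota.
exists k; split=> //; have [+ _] := u_int_kj 0 n_gt0; by rewrite addn0.
Qed.
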